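(* Let $(\mathcal{S},\mathcal{R})$ be an $r$-complete positive presentation satisfying: (C$_r$) $\mathcal{R}$ contains no relation $su=sv$ with $s\in\mathcal{S}$ and $u\neq v$; (E$_r$) there exists a set $\mathcal{S}'$ with $\mathcal{S}\subseteq\mathcal{S}'\subseteq\mathcal{S}^*$ such that for all $u,v\in\mathcal{S}'$ there exist $u',v'\in\mathcal{S}'$ satisfying $(uv')^{-1}(vu')\curvearrowright_r\varepsilon$. Then: (i) for all words $\mathbf{w},\mathbf{w}'$ on $\mathcal{S}\cup\mathcal{S}^{-1}$, $\mathbf{w}\equiv^{\pm}\mathbf{w}'$ holds if and only if there exist $u,v,w,u',v',w'\in\mathcal{S}^*$ with $\mathbf{w}\curvearrowright_r vu^{-1}$, $\mathbf{w}'\curvearrowright_r v'u'^{-1}$, $uw\equiv u'w'$ and $vw\equiv v'w'$; (ii) for all $u,u'\in\mathcal{S}^*$, $u\equiv^{\pm}u'$ holds if and only if there exists $w\in\mathcal{S}^*$ with $uw\equiv u'w$.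
   Context: A positive presentation is a pair $(\mathcal{S},\mathcal{R})$ where $\mathcal{S}$ is a nonempty set of letters and $\mathcal{R}$ is a family of relations $u=v$, i.e. unordered pairs $\{u,v\}$ of nonempty words in the free monoid $\mathcal{S}^*$ (letters are regarded as length-one words). $\varepsilon$ denotes the empty word; $\equiv$ is the smallest congruence on $\mathcal{S}^*$ containing all pairs of $\mathcal{R}$. Let $\mathcal{S}^{-1}=\{s^{-1}:s\in\mathcal{S}\}$ be a disjoint copy of $\mathcal{S}$; $\equiv^{\pm}$ is the smallest congruence on $(\mathcal{S}\cup\mathcal{S}^{-1})^*$ containing all pairs of $\mathcal{R}$ and all pairs $\{ss^{-1},\varepsilon\}$, $\{s^{-1}s,\varepsilon\}$ for $s\in\mathcal{S}$. For $u\in\mathcal{S}^*$, $u^{-1}$ is obtained by reversing the order of the letters of $u$ and replacing each $s$ by $s^{-1}$. Right reversing: for words $\mathbf{w},\mathbf{w}'$ on $\mathcal{S}\cup\mathcal{S}^{-1}$ we write $\mathbf{w}\curvearrowright_r\mathbf{w}'$ if $\mathbf{w}'$ is obtained from $\mathbf{w}$ by a finite (possibly empty) sequence of steps, each of which either deletes a subword $u^{-1}u$ with $u\in\mathcal{S}^*$ nonempty, or replaces a subword $u^{-1}v$ with $u,v\in\mathcal{S}^*$ nonempty by a word $v'u'^{-1}$ with $u',v'\in\mathcal{S}^*$ such that $uv'=vu'$ is a relation of $\mathcal{R}$. $(\mathcal{S},\mathcal{R})$ is $r$-complete if for all $u,v,u',v'\in\mathcal{S}^*$ with $uv'\equiv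 vu'$ there exist $u'',v'',w\in\mathcal{S}^*$ with $u^{-1}v\curvearrowright_r v''u''^{-1}$, $u'\equiv u''w$ and $v'\equiv v''w$. *)

From Stdlib Require Import List Relations.
Import ListNotations.
Set Implicit Arguments.

Section Defs.
Variable S : Type.

Inductive sletter : Type := Pos (s : S) | Neg (s : S).

(** Positive word u seen as a signed word, and its formal inverse u^{-1}. *)
Definition pw (u : list S) : list sletter := map Pos u.
Definition iw (u : list S) : list sletter := rev (map Neg u).

(** A family of relations: a predicate on pairs of words; the relations are
    unordered pairs, so [rel_of R x y] means {x,y} is a relation of R. *)
Definition rel_of (R : list S -> list S -> Prop) (x y : list S) : Prop :=
  R x y \/ R y x.

Definition positive_presentation (R : list S -> list S -> Prop) : Prop :=
  inhabited S /\ (forall u v, R u v -> u <> [] /\ v <> []).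

Inductive pequiv (R : list S -> list S -> Prop) : list S -> list S -> Prop :=
| pe_rel : forall a b u v, R u v -> pequiv R (a ++ u ++ b) (a ++ v ++ b)
| pe_refl : forall u, pequiv R u u
| pe_sym : forall u v, pequiv R u v -> pequiv R v u
| pe_trans : forall u v w, pequiv R u v -> pequiv R v w -> pequiv R u w.

Inductive sequiv (R : list S -> list S -> Prop) :
    list sletter -> list sletter -> Prop :=
| se_rel : forall a b u v, R u v -> sequiv R (a ++ pw u ++ b) (a ++ pw v ++ b)
| se_pn : forall a b s, sequiv R (a ++ [Pos s; Neg s] ++ b) (a ++ b)
| se_np : forall a b s, sequiv R (a ++ [Neg s; Pos s] ++ b) (a ++ b)
| se_refl : forall w, sequiv R w w
| se_sym : forall w w', sequiv R w w' -> sequiv R w' w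
| se_trans : forall w1 w2 w3, sequiv R w1 w2 -> sequiv R w2 w3 -> sequiv R w1 w3.

Inductive rev_step (R : list S -> list S -> Prop) :
    list sletter -> list sletter -> Prop :=
| rs_del : forall a b u, u <> [] ->
    rev_step R (a ++ iw u ++ pw u ++ b) (a ++ b)
| rs_rel : forall a b u v u' v', u <> [] -> v <> [] ->
    rel_of R (u ++ v') (v ++ u') ->
    rev_step R (a ++ iw u ++ pw v ++ b) (a ++ pw v' ++ iw u' ++ b).

Definition reverses (R : list S -> list S -> Prop) : relation (list sletter) :=
  clos_refl_trans _ (rev_step R).

Definition r_complete (R : list S -> list S -> Prop) : Prop :=
  forall u v u' v' : list S,
    pequiv R (u ++ v') (v ++ u') ->
    exists u'' v'' w : list S,
      reverses R (iw u ++ pw v) (pw v'' ++ iw u'') /\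
      pequiv R u' (u'' ++ w) /\ pequiv R v' (v'' ++ w).

Definition cond_Cr (R : list S -> list S -> Prop) : Prop :=
  forall (s : S) (u v : list S), R (s :: u) (s :: v) -> u = v.

Definition cond_Er (R : list S -> list S -> Prop) : Prop :=
  exists S' : list S -> Prop,
    (forall s : S, S' [s]) /\
    forall u v, S' u -> S' v ->
      exists u' v', S' u' /\ S' v' /\
        reverses R (iw (u ++ v') ++ pw (v ++ u')) [].

End Defs.

(* The enveloping group is never built.  Instead, a signed word w is given the set
   of its values: pairs of positive words (v, u) such that w acts as v u^{-1} on
   the monoid, read letter by letter.  By r-completeness, (C_r) makes the monoid
   left cancellative, and (E_r) yields common right multiples; under these Ore
   conditions every word has values, any two of them are equal fractions, and
   this is preserved along [sequiv].  Reversing preserves values, is sound for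
   [sequiv], and by r-completeness takes every word to some v u^{-1}, which is
   then a value of it: this gives (i); (ii) comes from the values (u, []) of a
   positive word u. *)

From Stdlib Require Import List Relations Lia.
Import ListNotations.
Set Implicit Arguments.

Section Words.
Variable S : Type.

Lemma pw_app (u v : list S) : pw (u ++ v) = pw u ++ pw v.
Proof. apply map_app. Qed.

Lemma iw_app (u v : list S) : iw (u ++ v) = iw v ++ iw u.
Proof. unfold iw. now rewrite map_app, rev_app_distr. Qed.

Lemma iw_cons (s : S) u : iw (s :: u) = iw u ++ [Neg s].
Proof. reflexivity. Qed.

Lemma length_pw (u : list S) : length (pw u) = length u.
Proof. apply length_map. Qed.

Lemma length_iw (u : list S) : length (iw u) = length u.
Proof. unfold iw. now rewrite length_rev, length_map. Qed.

Lemma iw_inj (u v : list S) : iw u = iw v -> u = v.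
Proof.
  unfold iw. intros E%rev_inj. revert v E.
  induction u as [|s u IH]; intros [|t v] E; try discriminate; [reflexivity|].
  injection E as -> E. now rewrite (IH v E).
Qed.

Definition is_neg (l : sletter S) : Prop :=
  match l with Pos _ => False | Neg _ => True end.

Lemma neg_iw (u : list S) : Forall is_neg (iw u).
Proof. apply Forall_rev, Forall_map, Forall_forall. easy. Qed.

Lemma pw_iw_inj (v u v' u' : list S) :
  pw v ++ iw u = pw v' ++ iw u' -> v = v' /\ u = u'.
Proof.
  revert v'. induction v as [|s v IH]; intros [|s' v'] E; simpl in E.
  - split; [reflexivity|]. now apply iw_inj.
  - pose proof (neg_iw u) as Hneg. rewrite E in Hneg.
    inversion Hneg as [|? ? Hs]. destruct Hs.
  - pose proof (neg_iw u') as Hneg. rewrite <- E in Hneg.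
    inversion Hneg as [|? ? Hs]. destruct Hs.
  - injection E as -> E. destruct (IH v' E) as [-> ->]. now split.
Qed.

(* The shape of the words v u^{-1}, on which no reversing step applies. *)
Fixpoint posneg_word (w : list (sletter S)) : Prop :=
  match w with
  | [] => True
  | Pos _ :: w => posneg_word w
  | Neg _ :: w => Forall is_neg w
  end.

Lemma posneg_word_pw_iw (v u : list S) : posneg_word (pw v ++ iw u).
Proof.
  induction v as [|s v IH]; [|exact IH].
  pose proof (neg_iw u) as Hneg. simpl.
  destruct (iw u) as [|[s|s] w]; [easy| |now inversion Hneg].
  inversion Hneg as [|? ? Hs]. destruct Hs.
Qed.

Lemma not_posneg_word_neg_pos c d (x y : S) :
  ~ posneg_word (c ++ Neg x :: Pos y :: d).
Proof.
  induction c as [|[s|s] c IH]; simpl; [| exact IH |].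
  - intros Hneg. inversion Hneg as [|? ? Hy]. exact Hy.
  - intros [_ Hneg]%Forall_app. inversion Hneg as [|? ? _ Hneg'].
    inversion Hneg' as [|? ? Hy]. exact Hy.
Qed.

Lemma not_posneg_word_iw_pw a b (u v : list S) : u <> [] -> v <> [] ->
  ~ posneg_word (a ++ iw u ++ pw v ++ b).
Proof.
  destruct u as [|x u], v as [|y v]; try easy; intros _ _.
  replace (a ++ iw (x :: u) ++ pw (y :: v) ++ b)
    with ((a ++ iw u) ++ Neg x :: Pos y :: pw v ++ b)
    by now rewrite iw_cons, <- !app_assoc.
  apply not_posneg_word_neg_pos.
Qed.

Lemma app_iw_pw_neg_pos a b (u v : list S) x y : u <> [] -> v <> [] ->
  a ++ iw u ++ pw v ++ b = [Neg x; Pos y] -> a = [] /\ b = [] /\ u = [x] /\ v = [y].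
Proof.
  intros Hu Hv E. pose proof (f_equal (@length _) E) as L.
  rewrite !length_app, length_iw, length_pw in L. simpl in L.
  destruct u as [|x' u], v as [|y' v]; try easy.
  destruct u, v, a, b; simpl in L; try lia.
  injection E as -> ->. now repeat split.
Qed.

End Words.

Section Presentation.
Variable S : Type.
Variable R : list S -> list S -> Prop.

Lemma pe_app_l a x y : pequiv R x y -> pequiv R (a ++ x) (a ++ y).
Proof.
  induction 1 as [c d u v Huv| |u v _ IH|u v w _ IHuv _ IHvw].
  - rewrite !app_assoc, <- (app_assoc (a ++ c) u), <- (app_assoc (a ++ c) v).
    now apply pe_rel.
  - apply pe_refl.
  - now apply pe_sym.
  - now apply pe_trans with (a ++ v).
Qed.

Lemma pe_app_r b x y : pequiv R x y -> pequiv R (x ++ b) (y ++ b).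
Proof.
  induction 1 as [c d u v Huv| |u v _ IH|u v w _ IHuv _ IHvw].
  - rewrite <- !app_assoc. now apply pe_rel.
  - apply pe_refl.
  - now apply pe_sym.
  - now apply pe_trans with (v ++ b).
Qed.

Lemma pe_cons s x y : pequiv R x y -> pequiv R (s :: x) (s :: y).
Proof. apply (pe_app_l [s]). Qed.

Lemma pe_of_rel u v : rel_of R u v -> pequiv R u v.
Proof.
  assert (Hrel : forall x y, R x y -> pequiv R x y).
  { intros x y H. pose proof (pe_rel R [] [] _ _ H) as K. now rewrite !app_nil_r in K. }
  intros [H|H]; [|apply pe_sym]; now apply Hrel.
Qed.

Lemma se_ctx c d x y : sequiv R x y -> sequiv R (c ++ x ++ d) (c ++ y ++ d).
Proof.
  induction 1 as [a b u v Huv|a b s|a b s|w|w w' _ IH|w1 w2 w3 _ IH12 _ IH23];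
    rewrite <- ?app_assoc, ?(app_assoc c a).
  - now apply se_rel.
  - apply se_pn.
  - apply se_np.
  - apply se_refl.
  - now apply se_sym.
  - now apply se_trans with (c ++ w2 ++ d).
Qed.

Lemma se_pw u v : pequiv R u v -> sequiv R (pw u) (pw v).
Proof.
  induction 1 as [a b u v Huv| |u v _ IH|u v w _ IHuv _ IHvw].
  - rewrite !pw_app. now apply se_rel.
  - apply se_refl.
  - now apply se_sym.
  - now apply se_trans with (pw v).
Qed.

Lemma se_iw_pw u : sequiv R (iw u ++ pw u) [].
Proof.
  induction u as [|s u IH]; [apply se_refl|].
  apply se_trans with (iw u ++ pw u); [|exact IH].
  rewrite iw_cons, <- app_assoc. apply se_np.
Qed.

Lemma se_pw_iw u : sequiv R (pw u ++ iw u) [].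
Proof.
  induction u as [|s u IH]; [apply se_refl|].
  apply se_trans with ([Pos s] ++ [] ++ [Neg s]); [|apply (se_pn R [] [])].
  rewrite iw_cons, app_assoc. exact (se_ctx [Pos s] [Neg s] IH).
Qed.

Lemma se_iw u v : pequiv R u v -> sequiv R (iw u) (iw v).
Proof.
  intros H.
  apply se_trans with (iw u ++ pw v ++ iw v).
  { apply se_sym. pose proof (se_ctx (iw u) [] (se_pw_iw v)) as K.
    now rewrite !app_nil_r in K. }
  apply se_trans with (iw u ++ pw u ++ iw v).
  { apply (se_ctx (iw u) (iw v)), se_sym, se_pw, H. }
  rewrite app_assoc. apply (se_ctx [] (iw v) (se_iw_pw u)).
Qed.

Lemma rev_step_sound w w' : rev_step R w w' -> sequiv R w w'.
Proof.
  destruct 1 as [a b u Hu|a b u v u' v' Hu Hv Huv].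
  - pose proof (se_ctx a b (se_iw_pw u)) as K. now rewrite <- app_assoc in K.
  - rewrite (app_assoc (iw u)), (app_assoc (pw v')). apply se_ctx.
    apply se_trans with (iw u ++ pw (v ++ u') ++ iw u').
    { rewrite pw_app, <- app_assoc.
      pose proof (se_ctx (iw u ++ pw v) [] (se_sym (se_pw_iw u'))) as K.
      now rewrite !app_nil_r, <- !app_assoc in K. }
    apply se_trans with (iw u ++ pw (u ++ v') ++ iw u').
    { apply se_ctx, se_pw, pe_sym, pe_of_rel, Huv. }
    rewrite pw_app, !app_assoc, <- app_assoc.
    exact (se_ctx [] (pw v' ++ iw u') (se_iw_pw u)).
Qed.

Lemma reverses_sound w w' : reverses R w w' -> sequiv R w w'.
Proof.
  induction 1 as [w w' Hstep|w|w1 w2 w3 _ IH12 _ IH23].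
  - now apply rev_step_sound.
  - apply se_refl.
  - now apply se_trans with w2.
Qed.

Lemma rev_step_ctx c d x y : rev_step R x y -> rev_step R (c ++ x ++ d) (c ++ y ++ d).
Proof.
  destruct 1 as [a b u Hu|a b u v u' v' Hu Hv Huv];
    rewrite <- !app_assoc, !(app_assoc c a).
  - now apply rs_del.
  - now apply rs_rel.
Qed.

Lemma reverses_ctx c d x y : reverses R x y -> reverses R (c ++ x ++ d) (c ++ y ++ d).
Proof.
  induction 1 as [x y Hstep|x|x y z _ IHxy _ IHyz].
  - now apply rt_step, rev_step_ctx.
  - apply rt_refl.
  - now apply rt_trans with (c ++ y ++ d).
Qed.

Lemma reverses_from_posneg_word w w' : reverses R w w' -> posneg_word w -> w' = w.
Proof.
  intros [|w1 w2 Hstep _]%clos_rt_rt1n Hw; [reflexivity|].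
  destruct Hstep as [a b u Hu|a b u v u' v' Hu Hv Huv].
  - now destruct (not_posneg_word_iw_pw a b Hu Hu).
  - now destruct (not_posneg_word_iw_pw a b Hu Hv).
Qed.

(* [is_frac w v u] says that v u^{-1} is a value of the signed word w as a right
   fraction: w is read from the left, a positive letter being split off the head
   of v (up to [pequiv]) and a negative letter being pushed onto v. *)
Fixpoint is_frac (w : list (sletter S)) (v u : list S) : Prop :=
  match w with
  | [] => pequiv R v u
  | Pos s :: w => exists v', pequiv R v (s :: v') /\ is_frac w v' u
  | Neg s :: w => is_frac w (s :: v) u
  end.

Lemma is_frac_congr w : forall v u v1 u1,
  pequiv R v v1 -> pequiv R u u1 -> is_frac w v u -> is_frac w v1 u1.
Proof.
  induction w as [|[s|s] w IH]; simpl; intros v u v1 u1 Hv Hu H.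
  - apply pe_trans with v; [now apply pe_sym|]. now apply pe_trans with u.
  - destruct H as [v' [H1 H2]]. exists v'. split.
    + apply pe_trans with v; [now apply pe_sym | exact H1].
    + exact (IH _ _ _ _ (pe_refl R v') Hu H2).
  - exact (IH _ _ _ _ (pe_cons s Hv) Hu H).
Qed.

Lemma is_frac_app w1 w2 : forall v u,
  is_frac (w1 ++ w2) v u <-> exists m, is_frac w1 v m /\ is_frac w2 m u.
Proof.
  induction w1 as [|[s|s] w1 IH]; simpl; intros v u.
  - split.
    + intros H. exists v. split; [apply pe_refl | exact H].
    + intros [m [H1 H2]]. exact (is_frac_congr _ (pe_sym H1) (pe_refl R u) H2).
  - split.
    + intros [v' [H1 [m [H2 H3]]%IH]]. exists m. split; [exists v'; auto | exact H3].
    + intros [m [[v' [H1 H2]] H3]]. exists v'. split; [exact H1|]. apply IH. eauto.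
  - apply IH.
Qed.

Lemma is_frac_pw x : forall v u, is_frac (pw x) v u <-> pequiv R v (x ++ u).
Proof.
  induction x as [|s x IH]; simpl; intros v u; [tauto|].
  split.
  - intros [v' [H1 H2%IH]]. apply pe_trans with (s :: v'); [exact H1 | now apply pe_cons].
  - intros H. exists (x ++ u). split; [exact H | apply IH, pe_refl].
Qed.

Lemma is_frac_iw x : forall v u, is_frac (iw x) v u <-> pequiv R (x ++ v) u.
Proof.
  induction x as [|s x IH]; intros v u; [simpl; tauto|].
  rewrite iw_cons, is_frac_app. simpl. split.
  - intros [m [H1%IH H2]]. apply pe_trans with (s :: m); [now apply pe_cons | exact H2].
  - intros H. exists (x ++ v). split; [apply IH, pe_refl | exact H].
Qed.

Lemma is_frac_pw_iw v u : is_frac (pw v ++ iw u) v u.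
Proof.
  apply is_frac_app. exists []. rewrite is_frac_pw, is_frac_iw, !app_nil_r.
  split; apply pe_refl.
Qed.

Lemma is_frac_app_r w : forall v u z, is_frac w v u -> is_frac w (v ++ z) (u ++ z).
Proof.
  induction w as [|[s|s] w IH]; simpl; intros v u z H.
  - now apply pe_app_r.
  - destruct H as [v' [H1 H2]]. exists (v' ++ z).
    split; [exact (pe_app_r z H1) | now apply IH].
  - exact (IH (s :: v) u z H).
Qed.

Lemma is_frac_ctx a b m m' :
  (forall x y, is_frac m x y -> is_frac m' x y) ->
  forall x y, is_frac (a ++ m ++ b) x y -> is_frac (a ++ m' ++ b) x y.
Proof.
  intros Hm x y [p [Ha [q [Hmq Hb]]%is_frac_app]]%is_frac_app.
  apply is_frac_app. exists p. split; [exact Ha|].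
  apply is_frac_app. exists q. auto.
Qed.

Lemma rev_step_is_frac w w' x y : rev_step R w w' -> is_frac w' x y -> is_frac w x y.
Proof.
  intros Hstep. revert x y.
  destruct Hstep as [a b u Hu|a b u v u' v' Hu Hv Huv].
  - rewrite (app_assoc (iw u)). apply (is_frac_ctx a b []). intros x y H.
    apply is_frac_app. exists (u ++ x). rewrite is_frac_iw, is_frac_pw.
    split; [apply pe_refl | now apply pe_app_l].
  - rewrite (app_assoc (iw u)), (app_assoc (pw v')). apply is_frac_ctx.
    intros x y [m [Hx Hy]]%is_frac_app.
    rewrite is_frac_pw in Hx. rewrite is_frac_iw in Hy.
    apply is_frac_app. exists (u ++ x). rewrite is_frac_iw, is_frac_pw.
    split; [apply pe_refl|].
    apply pe_trans with ((u ++ v') ++ m); [rewrite <- app_assoc; now apply pe_app_l|].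
    apply pe_trans with ((v ++ u') ++ m); [now apply pe_app_r, pe_of_rel|].
    rewrite <- app_assoc. now apply pe_app_l.
Qed.

Lemma reverses_is_frac w w' x y : reverses R w w' -> is_frac w' x y -> is_frac w x y.
Proof.
  induction 1 as [w w' Hstep|w|w1 w2 w3 _ IH12 _ IH23]; auto.
  now apply rev_step_is_frac.
Qed.

Definition frac_eq (v u v' u' : list S) : Prop :=
  exists z z', pequiv R (u ++ z) (u' ++ z') /\ pequiv R (v ++ z) (v' ++ z').

Lemma frac_eq_sym v u v' u' : frac_eq v u v' u' -> frac_eq v' u' v u.
Proof. intros (z & z' & Hu & Hv). exists z', z. split; now apply pe_sym. Qed.

Definition left_cancellative : Prop :=
  forall s u v, pequiv R (s :: u) (s :: v) -> pequiv R u v.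

Definition common_right_multiples : Prop :=
  forall u v, exists a b, pequiv R (u ++ a) (v ++ b).

Section Ore.
Hypothesis left_cancel : left_cancellative.
Hypothesis right_multiples : common_right_multiples.

Lemma frac_eq_trans v u v' u' v'' u'' :
  frac_eq v u v' u' -> frac_eq v' u' v'' u'' -> frac_eq v u v'' u''.
Proof.
  intros (a & b & Hu1 & Hv1) (c & d & Hu2 & Hv2).
  destruct (right_multiples b c) as (x & y & Hbc).
  assert (chain : forall p q r, pequiv R (p ++ a) (q ++ b) ->
            pequiv R (q ++ c) (r ++ d) -> pequiv R (p ++ a ++ x) (r ++ d ++ y)).
  { intros p q r H1 H2. rewrite !app_assoc.
    apply pe_trans with ((q ++ b) ++ x); [now apply pe_app_r|].
    apply pe_trans with ((q ++ c) ++ y); [rewrite <- !app_assoc; now apply pe_app_l|].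
    now apply pe_app_r. }
  exists (a ++ x), (d ++ y). split; eapply chain; eassumption.
Qed.

Lemma is_frac_exists w : exists v u, is_frac w v u.
Proof.
  induction w as [|[s|s] w (v & u & H)].
  - exists [], []. apply pe_refl.
  - exists (s :: v), u, v. split; [apply pe_refl | exact H].
  - destruct (right_multiples v [s]) as (a & b & Hab).
    exists b, (u ++ a). exact (is_frac_congr _ Hab (pe_refl R _) (is_frac_app_r _ _ _ a H)).
Qed.

Lemma is_frac_unique w : forall v u v' u',
  is_frac w v u -> is_frac w v' u' -> frac_eq v u v' u'.
Proof.
  induction w as [|[s|s] w IH]; simpl; intros v u v' u' H H'.
  - destruct (right_multiples u u') as (a & b & Hab). exists a, b. split; [exact Hab|].
    apply pe_trans with (u ++ a); [now apply pe_app_r|].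
    apply pe_trans with (u' ++ b); [exact Hab|]. now apply pe_app_r, pe_sym.
  - destruct H as [x [Hx H]], H' as [x' [Hx' H']].
    destruct (IH _ _ _ _ H H') as (a & b & Hu & Hv). exists a, b. split; [exact Hu|].
    apply pe_trans with ((s :: x) ++ a); [now apply pe_app_r|].
    apply pe_trans with ((s :: x') ++ b); [now apply pe_cons|]. now apply pe_app_r, pe_sym.
  - destruct (IH _ _ _ _ H H') as (a & b & Hu & Hv). exists a, b.
    split; [exact Hu | exact (left_cancel Hv)].
Qed.

(* A defining step of [sequiv] can only shrink or enlarge the set of values of a
   word, and all values of a word are equal fractions. *)
Lemma sequiv_frac_eq w w' : sequiv R w w' ->
  forall v u v' u', is_frac w v u -> is_frac w' v' u' -> frac_eq v u v' u'.
Proof.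
  assert (incl : forall w1 w2, (forall x y, is_frac w1 x y -> is_frac w2 x y) ->
            forall v u v' u', is_frac w1 v u -> is_frac w2 v' u' -> frac_eq v u v' u')
    by eauto using is_frac_unique.
  induction 1 as [a b u v Huv|a b s|a b s|w|w w' _ IH|w1 w2 w3 _ IH12 _ IH23].
  - apply incl, is_frac_ctx. intros x y Hx%is_frac_pw. apply is_frac_pw.
    apply pe_trans with (u ++ y); [exact Hx|]. now apply pe_app_r, pe_of_rel; left.
  - apply incl, (is_frac_ctx a b [Pos s; Neg s] []).
    intros x y (x' & Hx & Hy). now apply pe_trans with (s :: x').
  - intros v u v' u' H H'. apply frac_eq_sym.
    refine (incl _ _ (is_frac_ctx a b [] [Neg s; Pos s] _) _ _ _ _ H' H).
    intros x y Hxy. exists x. split; [apply pe_refl | exact Hxy].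
  - apply incl. auto.
  - intros v u v' u' H H'. now apply frac_eq_sym, IH.
  - intros v u v' u' H1 H3. destruct (is_frac_exists w2) as (v2 & u2 & H2).
    apply frac_eq_trans with v2 u2; eauto.
Qed.

Lemma sequiv_reverses_frac_eq w w' v u v' u' : sequiv R w w' ->
  reverses R w (pw v ++ iw u) -> reverses R w' (pw v' ++ iw u') -> frac_eq v u v' u'.
Proof.
  intros H Hw Hw'.
  apply (sequiv_frac_eq H); eapply reverses_is_frac; eauto using is_frac_pw_iw.
Qed.
End Ore.

Lemma reverses_nil_pequiv u v : reverses R (iw u ++ pw v) [] -> pequiv R u v.
Proof.
  intros Hrev.
  assert (H : is_frac (iw u ++ pw v) [] []) by (apply (reverses_is_frac _ _ Hrev), pe_refl).
  apply is_frac_app in H as (m & Hu & Hv).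
  rewrite is_frac_iw, app_nil_r in Hu. rewrite is_frac_pw, app_nil_r in Hv.
  now apply pe_trans with m.
Qed.

Lemma common_right_multiples_of : cond_Er R -> common_right_multiples.
Proof.
  intros (S' & letters_in_S' & HS').
  assert (Hx : forall v x, S' x -> exists y x', S' y /\ pequiv R (x ++ x') (v ++ y)).
  { induction v as [|t v IH]; intros x Hx.
    - exists x, []. split; [exact Hx|]. rewrite app_nil_r. apply pe_refl.
    - destruct (HS' x [t] Hx (letters_in_S' t)) as (b & a & Hb & _ & Hab%reverses_nil_pequiv).
      destruct (IH b Hb) as (y & b' & Hy & Hbb').
      exists y, (a ++ b'). split; [exact Hy|]. rewrite app_assoc.
      apply pe_trans with ((t :: b) ++ b'); [now apply pe_app_r | exact (pe_cons t Hbb')]. }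
  intros u. induction u as [|s u IH]; intros v.
  - exists v, []. rewrite app_nil_r. apply pe_refl.
  - destruct (Hx v [s] (letters_in_S' s)) as (y & x' & _ & Hs).
    destruct (IH x') as (a & b & Hab).
    exists a, (y ++ b). rewrite app_assoc.
    apply pe_trans with ([s] ++ x' ++ b); [exact (pe_cons s Hab)|].
    rewrite app_assoc. now apply pe_app_r.
Qed.

Lemma rev_step_neg_pos s w : cond_Cr R -> rev_step R [Neg s; Pos s] w ->
  exists x, w = pw x ++ iw x.
Proof.
  intros Cr Hstep. remember [Neg s; Pos s] as l eqn:El.
  destruct Hstep as [a b u Hu|a b u v u' v' Hu Hv Huv].
  - destruct (app_iw_pw_neg_pos a b Hu Hu El) as (-> & -> & _). now exists [].
  - destruct (app_iw_pw_neg_pos a b Hu Hv El) as (-> & -> & -> & ->).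
    exists v'. rewrite app_nil_r.
    destruct Huv as [H|H]; apply Cr in H; now subst.
Qed.

Lemma reverses_neg_pos_frac s v u : cond_Cr R ->
  reverses R [Neg s; Pos s] (pw v ++ iw u) -> v = u.
Proof.
  intros Cr Hrev%clos_rt_rt1n.
  inversion Hrev as [Hnil|w1 w2 Hstep Hrest].
  - exfalso. apply (not_posneg_word_iw_pw [] [] (u := [s]) (v := [s])); try easy.
    change (posneg_word [Neg s; Pos s]). rewrite Hnil. apply posneg_word_pw_iw.
  - destruct (rev_step_neg_pos Cr Hstep) as [x ->].
    apply clos_rt1n_rt, reverses_from_posneg_word in Hrest; [|apply posneg_word_pw_iw].
    apply pw_iw_inj in Hrest as [-> ->]. reflexivity.
Qed.

Lemma left_cancellative_of : r_complete R -> cond_Cr R -> left_cancellative.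
Proof.
  intros Rc Cr s u v H.
  destruct (Rc [s] [s] v u H) as (u'' & v'' & z & Hrev & Hv & Hu).
  apply reverses_neg_pos_frac in Hrev as ->; [|exact Cr].
  apply pe_trans with (u'' ++ z); [exact Hu | now apply pe_sym].
Qed.

Lemma reverses_to_frac : r_complete R -> common_right_multiples ->
  forall w, exists v u, reverses R w (pw v ++ iw u).
Proof.
  intros Rc CM w. induction w as [|[s|s] w (v & u & Hw)].
  - exists [], []. apply rt_refl.
  - exists (s :: v), u.
    pose proof (reverses_ctx [Pos s] [] Hw) as K. now rewrite !app_nil_r in K.
  - destruct (CM [s] v) as (a & b & Hab).
    destruct (Rc [s] v b a Hab) as (u' & v' & _ & Hrev & _).
    exists v', (u ++ u'). rewrite iw_app.
    apply rt_trans with ([Neg s] ++ pw v ++ iw u).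
    + pose proof (reverses_ctx [Neg s] [] Hw) as K. now rewrite !app_nil_r in K.
    + pose proof (reverses_ctx [] (iw u) Hrev) as K. now rewrite <- !app_assoc in K.
Qed.

Lemma se_pw_iw_expand v u z : sequiv R (pw v ++ iw u) (pw (v ++ z) ++ iw (u ++ z)).
Proof.
  rewrite pw_app, iw_app, <- !app_assoc, (app_assoc (pw z)).
  apply se_sym. exact (se_ctx (pw v) (iw u) (se_pw_iw z)).
Qed.

Lemma se_pw_iw_congr v u v' u' : pequiv R v v' -> pequiv R u u' ->
  sequiv R (pw v ++ iw u) (pw v' ++ iw u').
Proof.
  intros Hv Hu. apply se_trans with (pw v' ++ iw u).
  - exact (se_ctx [] (iw u) (se_pw Hv)).
  - pose proof (se_ctx (pw v') [] (se_iw Hu)) as K. now rewrite !app_nil_r in K.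
Qed.

Lemma sequiv_of_frac_eq v u v' u' : frac_eq v u v' u' ->
  sequiv R (pw v ++ iw u) (pw v' ++ iw u').
Proof.
  intros (z & z' & Hu & Hv).
  apply se_trans with (pw (v ++ z) ++ iw (u ++ z)); [apply se_pw_iw_expand|].
  apply se_trans with (pw (v' ++ z') ++ iw (u' ++ z')); [now apply se_pw_iw_congr|].
  apply se_sym, se_pw_iw_expand.
Qed.
End Presentation.

Theorem proposition7p3 (S : Type) (R : list S -> list S -> Prop) :
  positive_presentation R ->
  r_complete R -> cond_Cr R -> cond_Er R ->
  (forall w w' : list (sletter S),
     sequiv R w w' <->
     exists u v w0 u' v' w0' : list S,
       reverses R w (pw v ++ iw u) /\
       reverses R w' (pw v' ++ iw u') /\
       pequiv R (u ++ w0) (u' ++ w0') /\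
       pequiv R (v ++ w0) (v' ++ w0')) /\
  (forall u u' : list S,
     sequiv R (pw u) (pw u') <-> exists w : list S, pequiv R (u ++ w) (u' ++ w)).
Proof.
  intros _ Rc Cr Er.
  pose proof (left_cancellative_of Rc Cr) as LC.
  pose proof (common_right_multiples_of Er) as CM.
  split.
  - intros w w'. split.
    + intros H.
      destruct (reverses_to_frac Rc CM w) as (v & u & Hw).
      destruct (reverses_to_frac Rc CM w') as (v' & u' & Hw').
      destruct (sequiv_reverses_frac_eq LC CM v u v' u' H Hw Hw') as (z & z' & Hu & Hv).
      exists u, v, z, u', v', z'. auto.
    + intros (u & v & z & u' & v' & z' & Hw & Hw' & Hu & Hv).
      apply se_trans with (pw v ++ iw u); [now apply reverses_sound|].
      apply se_trans with (pw v' ++ iw u'); [apply sequiv_of_frac_eq; now exists z, z'|].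
      apply se_sym. now apply reverses_sound.
  - assert (Hpw : forall x, is_frac R (pw x) x []).
    { intros x. apply is_frac_pw. rewrite app_nil_r. apply pe_refl. }
    intros u u'. split.
    + intros H. destruct (sequiv_frac_eq LC CM H _ _ _ _ (Hpw u) (Hpw u')) as (z & z' & Hz & Hu).
      exists z. apply pe_trans with (u' ++ z'); [exact Hu | now apply pe_app_l, pe_sym].
    + intros (z & Hz).
      assert (K : sequiv R (pw u ++ iw []) (pw u' ++ iw []))
        by (apply sequiv_of_frac_eq; exists z, z; split; [apply pe_refl | exact Hz]).
      now rewrite !app_nil_r in K.
Qed.
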